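(* Let $c<-14$ and let $u\in\mathbb{R}^3$ with $\kappa(u)=c$. Then there exists $\gamma\in\Gamma$ such that $u'=\gamma u=(x',y',z')$ satisfies at least one of: (M) $u'\in\Omega_0^M$; (E) $-2\le \bar z(u')\le 2$, i.e. $-2\le -x'y'-z'\le 2$; ($\Sigma$) $x'=0$ or $y'=0$.
   Context: $\kappa(x,y,z)=-x^2-y^2+z^2+xyz-2$ on $\mathbb{R}^3$; for $u=(x,y,z)$ set $\bar z(u)=-xy-z$. $Q_x(x,y,z)=(yz-x,y,z)$, $Q_y(x,y,z)=(x,xz-y,z)$, $Q_z(x,y,z)=(x,y,-xy-z)$. $\Gamma$ is the group generated by $Q_x,Q_y,Q_z$, the sign changes $(x,y,z)\mapsto(-x,y,-z)$, $(x,-y,-z)$, $(-x,-y,z)$ and the transposition $(x,y,z)\mapsto(y,x,z)$; all preserve $\kappa$. $\Omega_0^M=\{(x,y,z): z<-2,\ xy+z>2\}$. *)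

From Stdlib Require Import Reals.
Open Scope R_scope.

Definition pt := (R * R * R)%type.

Definition kappa (u : pt) : R :=
  let '(x, y, z) := u in - x^2 - y^2 + z^2 + x*y*z - 2.

Definition zbar (u : pt) : R := let '(x, y, z) := u in - x*y - z.

Definition Qx (u : pt) : pt := let '(x, y, z) := u in (y*z - x, y, z).
Definition Qy (u : pt) : pt := let '(x, y, z) := u in (x, x*z - y, z).
Definition Qz (u : pt) : pt := let '(x, y, z) := u in (x, y, - x*y - z).
Definition S1 (u : pt) : pt := let '(x, y, z) := u in (- x, y, - z).
Definition S2 (u : pt) : pt := let '(x, y, z) := u in (x, - y, - z).
Definition S3 (u : pt) : pt := let '(x, y, z) := u in (- x, - y, z).
Definition Tr (u : pt) : pt := let '(x, y, z) := u in (y, x, z).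

Inductive generator : (pt -> pt) -> Prop :=
| gen_Qx : generator Qx
| gen_Qy : generator Qy
| gen_Qz : generator Qz
| gen_S1 : generator S1
| gen_S2 : generator S2
| gen_S3 : generator S3
| gen_Tr : generator Tr.

(* Each generator is an
   involution (its own inverse), so the generated group is exactly the set of
   finite compositions of generators (including the identity). *)
Inductive in_Gamma : (pt -> pt) -> Prop :=
| Gamma_id : in_Gamma (fun u => u)
| Gamma_comp : forall g s, generator s -> in_Gamma g ->
    in_Gamma (fun u => s (g u)).

Definition Omega0M (u : pt) : Prop :=
  let '(x, y, z) := u in z < -2 /\ x*y + z > 2.

(* Put D := -(c + 2) > 0.  A point reaches a target region at once (possibly after Qz, which
   swaps z and zbar, or a sign change) unless z and zbar have opposite signs and modulus > 2;
   as z * zbar = D - x^2 - y^2, such a point has x^2 + y^2 > D.  There, after arranging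
   y^2 <= x^2 (Tr) and |z| <= |zbar| (Qz), the Vieta move Qx replaces x by x' = y z - x with
   x x' = x y z - x^2 = y^2 - z^2 - D, whence x'^2 <= x^2 - min (2 y^2, D).  So x^2 + y^2
   drops by D at each move, unless 0 < 2 y^2 < D; in that case y^2 stays the smaller coordinate
   forever and x^2 drops by 2 y^2 at each move.  Both descents terminate by the Archimedean
   property. *)

From Stdlib Require Import Reals Lra Psatz.
Open Scope R_scope.

Definition target (u : pt) : Prop :=
  Omega0M u \/ (-2 <= zbar u <= 2) \/ (fst (fst u) = 0 \/ snd (fst u) = 0).

Definition reaches_target (u : pt) : Prop :=
  exists g : pt -> pt, in_Gamma g /\ target (g u).

Lemma in_Gamma_generator s : generator s -> in_Gamma s.
Proof. intros Hs. exact (Gamma_comp _ _ Hs Gamma_id). Qed.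

Lemma in_Gamma_comp g h : in_Gamma g -> in_Gamma h -> in_Gamma (fun u => g (h u)).
Proof.
  intros Hg Hh; induction Hg as [|g s Hs _ IH].
  - exact Hh.
  - exact (Gamma_comp _ s Hs IH).
Qed.

Lemma target_reaches_target u : target u -> reaches_target u.
Proof. intros Ht. exists (fun v => v). split; [constructor | exact Ht]. Qed.

Lemma reaches_target_Gamma g u :
  in_Gamma g -> reaches_target (g u) -> reaches_target u.
Proof.
  intros Hg [h [Hh Ht]]. exists (fun v => h (g v)).
  split; [apply in_Gamma_comp |]; assumption.
Qed.

Lemma reaches_target_generator s u :
  generator s -> reaches_target (s u) -> reaches_target u.
Proof. intros Hs. apply reaches_target_Gamma, in_Gamma_generator, Hs. Qed.

Lemma descent_by_step {A : Type} (S P : A -> Prop) (m : A -> R) (d : R) :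
  0 < d -> (forall a, S a -> 0 <= m a) ->
  (forall a, S a -> P a \/ exists b, S b /\ m b <= m a - d /\ (P b -> P a)) ->
  forall a, S a -> P a.
Proof.
  intros Hd Hm Hstep.
  assert (Hn : forall n a, S a -> m a <= INR n * d -> P a).
  { induction n as [|n IH]; intros a Ha Hma;
      destruct (Hstep a Ha) as [HP | [b [Hb [Hmb HPb]]]]; auto.
    - specialize (Hm b Hb). simpl in Hma. lra.
    - apply HPb, (IH b Hb). rewrite S_INR in Hma. lra. }
  intros a Ha. destruct (INR_unbounded (m a / d)) as [n Hn'].
  apply (Hn n a Ha).
  assert (m a = m a / d * d) by (field; lra). nra.
Qed.

Lemma sq_le_of_mul_le (x a b : R) :
  x <> 0 -> - b <= x * a <= b -> b <= x^2 -> a^2 <= b.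
Proof.
  intros Hx [Hl Hu] Hb. pose proof (Rsqr_pos_lt x Hx) as Hx2. unfold Rsqr in Hx2.
  assert (a^2 * x^2 <= b * x^2) by nra. nra.
Qed.

Lemma kappa_Qx u : kappa (Qx u) = kappa u.
Proof. destruct u as [[x y] z]; simpl; ring. Qed.

Lemma kappa_Qz u : kappa (Qz u) = kappa u.
Proof. destruct u as [[x y] z]; simpl; ring. Qed.

Lemma kappa_Tr u : kappa (Tr u) = kappa u.
Proof. destruct u as [[x y] z]; simpl; ring. Qed.

Lemma zbar_Qz u : zbar (Qz u) = snd u.
Proof. destruct u as [[x y] z]; simpl; ring. Qed.

Lemma reaches_target_or_hyperbolic x y z :
  reaches_target (x, y, z) \/
  (4 < z^2 /\ 4 < zbar (x, y, z)^2 /\ z * zbar (x, y, z) < 0).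
Proof.
  destruct (Rle_lt_dec (z^2) 4) as [Hz | Hz].
  { left. apply (reaches_target_generator Qz); [constructor |].
    apply target_reaches_target. right; left. rewrite zbar_Qz. simpl. split; nra. }
  destruct (Rle_lt_dec (zbar (x, y, z)^2) 4) as [Hzb | Hzb].
  { left. apply target_reaches_target. right; left. split; nra. }
  destruct (Rlt_le_dec (z * zbar (x, y, z)) 0) as [Hneg | Hpos]; [right; auto | left].
  assert (Hw : zbar (x, y, z) = - x*y - z) by reflexivity.
  set (w := zbar (x, y, z)) in *.
  destruct (Rlt_le_dec z 0) as [Hzn | Hzp].
  - assert (z < -2) by nra. assert (w <= 0) by nra. assert (w < -2) by nra.
    apply target_reaches_target. left. simpl. lra.
  - assert (2 < z) by nra. assert (0 <= w) by nra. assert (2 < w) by nra.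
    apply (reaches_target_generator S2); [constructor |].
    apply target_reaches_target. left. simpl. lra.
Qed.

Section Descent.

Variable c : R.
Hypothesis hc : c < -2.

Lemma Qx_shrinks_x x y z :
  kappa (x, y, z) = c -> y^2 <= x^2 -> 4 < z^2 ->
  z * zbar (x, y, z) < 0 -> z^2 <= zbar (x, y, z)^2 ->
  (y*z - x)^2 <= x^2 - 2*y^2 \/ (y*z - x)^2 <= x^2 + (c + 2).
Proof.
  simpl. intros Hk Hyx Hz Hneg Hmin.
  (* [z] and [zbar = -xy - z] have opposite signs and [|z| <= |zbar|], so [xy] has the sign of [z]. *)
  assert (Hxyz : 0 <= x*y*z) by nra.
  assert (Hxyz2 : 2*y^2 <= x*y*z) by nra.
  assert (Hx : x <> 0) by (intros ->; nra).
  destruct (Rle_lt_dec (x*y*z) (x^2)) as [Hle | Hlt].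
  - left. enough ((y*z - x)^2 <= x^2 - x*y*z) by lra.
    apply (sq_le_of_mul_le x); [exact Hx | split; nra | nra].
  - right. apply (sq_le_of_mul_le x); [exact Hx | split; nra | lra].
Qed.

Lemma hyperbolic_step x y z :
  kappa (x, y, z) = c -> y^2 <= x^2 -> 4 < z^2 -> 4 < zbar (x, y, z)^2 ->
  z * zbar (x, y, z) < 0 ->
  exists x' z', kappa (x', y, z') = c /\
    (reaches_target (x', y, z') -> reaches_target (x, y, z)) /\
    (x'^2 <= x^2 - 2*y^2 \/ x'^2 <= x^2 + (c + 2)).
Proof.
  intros Hk Hyx Hz Hzb Hneg.
  destruct (Rle_lt_dec (z^2) (zbar (x, y, z)^2)) as [Hmin | Hmin].
  - exists (y*z - x), z. split; [rewrite <- Hk; apply (kappa_Qx (x, y, z)) |].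
    split; [apply (reaches_target_generator Qx (x, y, z)); constructor |].
    now apply Qx_shrinks_x.
  - set (zb := zbar (x, y, z)) in *.
    assert (Hkb : kappa (x, y, zb) = c) by (rewrite <- Hk; apply (kappa_Qz (x, y, z))).
    assert (Hzbb : zbar (x, y, zb) = z) by apply (zbar_Qz (x, y, z)).
    exists (y*zb - x), zb. split; [rewrite <- Hkb; apply (kappa_Qx (x, y, zb)) |].
    split.
    + intros H. apply (reaches_target_generator Qz (x, y, z)); [constructor |].
      apply (reaches_target_generator Qx (x, y, zb)); [constructor | exact H].
    + apply Qx_shrinks_x; rewrite ?Hzbb; nra.
Qed.

Lemma reaches_target_small_y y :
  y <> 0 -> 2*y^2 < -(c + 2) ->
  forall x z, kappa (x, y, z) = c -> reaches_target (x, y, z).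
Proof.
  intros Hy Hsmall x z Hk. pose proof (Rsqr_pos_lt y Hy) as Hy2. unfold Rsqr in Hy2.
  apply (descent_by_step (fun u => kappa u = c /\ snd (fst u) = y) reaches_target
           (fun u => fst (fst u)^2) (2*y^2)); [nra | intros; nra | | auto].
  intros [[x0 y0] z0] [Hk0 Hy0]. simpl in Hy0; subst y0.
  destruct (reaches_target_or_hyperbolic x0 y z0) as [HR | [Hz [Hzb Hneg]]]; [now left | right].
  assert (Hyx : y^2 <= x0^2) by (simpl in *; nra).
  destruct (hyperbolic_step x0 y z0 Hk0 Hyx Hz Hzb Hneg) as [x' [z' [Hk' [HR Hd]]]].
  exists (x', y, z'). simpl. split; [auto | split; [lra | exact HR]].
Qed.

Lemma sorted_descent_step x y z :
  kappa (x, y, z) = c -> y^2 <= x^2 ->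
  reaches_target (x, y, z) \/
  exists v, kappa v = c /\
    fst (fst v)^2 + snd (fst v)^2 <= x^2 + y^2 + (c + 2) /\
    (reaches_target v -> reaches_target (x, y, z)).
Proof.
  intros Hk Hyx.
  destruct (reaches_target_or_hyperbolic x y z) as [HR | [Hz [Hzb Hneg]]]; [now left |].
  destruct (Req_dec y 0) as [Hy | Hy].
  { left. apply target_reaches_target. right; right; right. exact Hy. }
  destruct (Rlt_le_dec (2*y^2) (-(c + 2))) as [Hsmall | Hlarge].
  { left. now apply reaches_target_small_y. }
  right. destruct (hyperbolic_step x y z Hk Hyx Hz Hzb Hneg) as [x' [z' [Hk' [HR Hd]]]].
  exists (x', y, z'). simpl. split; [auto | split; [lra | exact HR]].
Qed.

Lemma reaches_target_kappa u : kappa u = c -> reaches_target u.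
Proof.
  apply (descent_by_step (fun u => kappa u = c) reaches_target
           (fun u => fst (fst u)^2 + snd (fst u)^2) (-(c + 2))); [lra | intros; nra |].
  intros [[x y] z] Hk. cbn [fst snd].
  destruct (Rle_lt_dec (y^2) (x^2)) as [Hyx | Hxy].
  - destruct (sorted_descent_step x y z Hk Hyx) as [HR | [v [Hv [Hm HR]]]];
      [now left | right; exists v; split; [auto | split; [lra | exact HR]]].
  - assert (HkT : kappa (y, x, z) = c) by (rewrite <- Hk; apply (kappa_Tr (x, y, z))).
    destruct (sorted_descent_step y x z HkT (Rlt_le _ _ Hxy)) as [HR | [v [Hv [Hm HR]]]].
    + left. now apply (reaches_target_generator Tr (x, y, z)); [constructor |].
    + right. exists v. split; [auto | split; [lra |]].
      intros H. apply (reaches_target_generator Tr (x, y, z)); [constructor | exact (HR H)].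
Qed.

End Descent.

Theorem mainTheorem4 (c : R) (hc : c < -14) (u : pt) (hu : kappa u = c) :
  exists g : pt -> pt, in_Gamma g /\
    (Omega0M (g u) \/
     (-2 <= zbar (g u) <= 2) \/
     (fst (fst (g u)) = 0 \/ snd (fst (g u)) = 0)).
Proof.
  apply (reaches_target_kappa c); [lra | exact hu].
Qed.
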